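(* Consider the threshold delay system (the ''TDE model'') described in the context and let $N_{T1}=f^{-1}(\lambda/\mu)$. Let $(\phi_1,\phi_2,\phi_3)^T\in D_{N_T}$ and let $(N,P,Z)^T:[0,\infty)\to\mathbb{R}^3$ be the solution of the corresponding initial value problem. If $N_T>N_{T1}$, then for any constant $\beta>N_T-N_{T1}$ there exists $t_1\ge t_0$ such that $P(t)<\beta$ for all $t\ge t_1$.
   Context: Standing assumptions: constants $\mu>\lambda>0$, $g>0$, $\gamma\in(0,1]$, $\delta>0$ with $\gamma g>\delta$, $\delta_0\ge 0$, $m>0$, $N_T>0$. The functions $f,h:[0,\infty)\to[0,\infty)$ are $C^1$ with $f(0)=0$, $f'>0$, $\lim_{N\to\infty}f(N)=1$ and $h(0)=0$, $h'>0$, $\lim_{P\to\infty}h(P)=1$. The function $R:[0,\infty)\to[0,\infty)$ is $C^1$ with $R\ge0$, $R'\ge0$, $R'(0)>0$ if $R(0)=0$, $\lim_{P\to\infty}R(P)=R_\infty<\infty$. For a function $P$ and $s\in[0,m]$, the delay $\tau(s,P_t)\ge0$ is defined implicitly by $\int_{-\tau(s,P_t)}^0 R(P(t+u))\,du=s$. TDE model, for $t\ge t_0$: $$N'(t)=-\mu P f(N)+\lambda P+\delta Z+(1-\gamma)gZh(P)+\delta_0(N_T-N-P-Z),$$ $$P'(t)=\mu P f(N)-\lambda P-gZh(P),$$ $$Z'(t)=R(P(t))e^{-\delta_0\tau(m,P_t)}\frac{\gamma g Z(t-\tau(m,P_t))h(P(t-\tau(m,P_t)))}{R(P(t-\tau(m,P_t)))}-\delta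 Z(t),$$ with initial conditions $N(t_0+t)=\phi_1(t)$, $P(t_0+t)=\phi_2(t)$, $Z(t_0+t)=\phi_3(t)$ for $t\in[-t_0,0]$. $D_{N_T}$ is the set of triples $(\phi_1,\phi_2,\phi_3)$ of continuous functions on $[-t_0,0]$ (some $t_0>0$) with $\phi_i>0$, $\int_{-t_0}^0R(\phi_2(u))\,du=m$, and $$N_T=\phi_1(0)+\phi_2(0)+\phi_3(0)+\int_0^m e^{-\delta_0\tau(s,\phi_2)}\frac{\gamma g\,\phi_3(-\tau(s,\phi_2))h(\phi_2(-\tau(s,\phi_2)))}{R(\phi_2(-\tau(s,\phi_2)))}\,ds,$$ where $\tau(s,\phi_2)\in[0,t_0]$ solves $\int_{-\tau(s,\phi_2)}^0R(\phi_2(u))\,du=s$. *)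

From Stdlib Require Import Reals.
From Coquelicot Require Import Coquelicot.
Open Scope R_scope.

Definition cont_within (D : R -> Prop) (u : R -> R) (x : R) : Prop :=
  filterlim u (within D (locally x)) (locally (u x)).

Definition nonneg (x : R) : Prop := 0 <= x.

(* u is C^1 on [0,oo) with derivative du (one-sided at 0, via continuity of du) *)
Definition C1_nonneg (u du : R -> R) : Prop :=
  (forall x, 0 < x -> is_derive u x (du x)) /\
  (forall x, 0 <= x -> cont_within nonneg du x) /\
  cont_within nonneg u 0.

Definition sat_fh (f fd : R -> R) : Prop :=
  C1_nonneg f fd /\ (forall x, 0 <= x -> 0 <= f x) /\ f 0 = 0 /\
  (forall x, 0 <= x -> 0 < fd x) /\ is_lim f p_infty 1.

Definition sat_R (Rf Rd : R -> R) : Prop :=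
  C1_nonneg Rf Rd /\ (forall x, 0 <= x -> 0 <= Rf x) /\
  (forall x, 0 <= x -> 0 <= Rd x) /\ (Rf 0 = 0 -> 0 < Rd 0) /\
  exists Rinf : R, is_lim Rf p_infty Rinf.

(* tau >= 0 solves  int_{-tau}^0 Rf (P (t+u)) du = s ;
   we also record tau <= t so that t - tau lies in the domain [0,oo) *)
Definition is_delay (Rf : R -> R) (P : R -> R) (t s tau : R) : Prop :=
  0 <= tau <= t /\ RInt (fun u => Rf (P (t + u))) (- tau) 0 = s.

Definition in_D (Rf h : R -> R) (gamma g delta0 m NT t0 : R)
    (phi1 phi2 phi3 : R -> R) : Prop :=
  0 < t0 /\
  (forall x, -t0 <= x <= 0 ->
     cont_within (fun y => -t0 <= y <= 0) phi1 x /\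
     cont_within (fun y => -t0 <= y <= 0) phi2 x /\
     cont_within (fun y => -t0 <= y <= 0) phi3 x /\
     0 < phi1 x /\ 0 < phi2 x /\ 0 < phi3 x) /\
  RInt (fun u => Rf (phi2 u)) (- t0) 0 = m /\
  exists tau : R -> R,
    (forall s, 0 <= s <= m ->
       0 <= tau s <= t0 /\ RInt (fun u => Rf (phi2 u)) (- tau s) 0 = s) /\
    NT = phi1 0 + phi2 0 + phi3 0 +
         RInt (fun s => exp (- delta0 * tau s) *
                  (gamma * g * phi3 (- tau s) * h (phi2 (- tau s)))
                  / Rf (phi2 (- tau s))) 0 m.

Definition is_solution (f h Rf : R -> R)
    (mu lambda g gamma delta delta0 m NT t0 : R)
    (phi1 phi2 phi3 N P Z : R -> R) : Prop :=
  (forall t, 0 <= t <= t0 ->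
     N t = phi1 (t - t0) /\ P t = phi2 (t - t0) /\ Z t = phi3 (t - t0)) /\
  (forall t, 0 <= t ->
     cont_within nonneg N t /\ cont_within nonneg P t /\ cont_within nonneg Z t) /\
  (forall t, t0 < t ->
     is_derive N t (- mu * P t * f (N t) + lambda * P t + delta * Z t
                    + (1 - gamma) * g * Z t * h (P t)
                    + delta0 * (NT - N t - P t - Z t)) /\
     is_derive P t (mu * P t * f (N t) - lambda * P t - g * Z t * h (P t)) /\
     exists tau : R,
       is_delay Rf P t m tau /\
       is_derive Z t (Rf (P t) * exp (- delta0 * tau) *
                      (gamma * g * Z (t - tau) * h (P (t - tau)))
                      / Rf (P (t - tau)) - delta * Z t)).

(* Along a positive solution the quantity
     V t = exp (delta0 t) (N + P + Z - N_T)(t) + int_{Q t - m}^{Q t} k,   Q t = int_0^t R (P u) du,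
   is constant, where k s = exp (delta0 T s) gamma g Z (T s) h (P (T s)) / R (P (T s)) with
   T = Q^{-1} is the density, in the maturation variable s = Q t, of the cells that divided at
   time T s.  Its derivative vanishes because the delay satisfies Q (t - tau) = Q t - m, and
   V t0 = 0 is exactly the constraint defining D_{N_T}; hence N + P + Z <= N_T.  Positivity of
   N, P, Z is propagated by a first-exit argument: near a first zero each component satisfies
   u' >= - K u.  Finally, while P >= beta we have N <= N_T - beta < N_T1, so f N < lambda / mu and
   P' <= beta (mu f (N_T - beta) - lambda) < 0: P falls below beta in finite time and can never
   climb back to beta. *)

From Pilot Require Import Defs.
From Stdlib Require Import Reals Lra Classical ClassicalEpsilon.
From Coquelicot Require Import Coquelicot.
Open Scope R_scope.

(** * Elementary real analysis *)

Lemma cont_within_eps (D : R -> Prop) (u : R -> R) (x : R) :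
  cont_within D u x -> forall eps, 0 < eps ->
  exists del, 0 < del /\
    forall y, D y -> Rabs (y - x) < del -> Rabs (u y - u x) < eps.
Proof.
  intros Hu eps Heps.
  destruct (proj1 (filterlim_locally _ _) Hu (mkposreal eps Heps)) as [del Hdel].
  exists del; split; [apply cond_pos|].
  intros y Dy Hy; exact (Hdel y Hy Dy).
Qed.

Lemma continuous_eps (u : R -> R) (x : R) :
  continuous u x -> forall eps, 0 < eps ->
  exists del, 0 < del /\ forall y, Rabs (y - x) < del -> Rabs (u y - u x) < eps.
Proof.
  intros Hu eps Heps.
  destruct (proj1 (filterlim_locally _ _) Hu (mkposreal eps Heps)) as [del Hdel].
  exists del; split; [apply cond_pos|].
  intros y Hy; exact (Hdel y Hy).
Qed.

Lemma continuous_of_eps (u : R -> R) (x : R) :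
  (forall eps, 0 < eps -> exists del, 0 < del /\
     forall y, Rabs (y - x) < del -> Rabs (u y - u x) < eps) ->
  continuous u x.
Proof.
  intros Hu. apply filterlim_locally. intros [eps Heps].
  destruct (Hu eps Heps) as [del [Hdel Hball]].
  exists (mkposreal del Hdel). exact Hball.
Qed.

Lemma cont_within_subset (D D' : R -> Prop) (u : R -> R) (x : R) :
  (forall y, D' y -> D y) -> cont_within D u x -> cont_within D' u x.
Proof.
  intros HD Hu Q HQ. specialize (Hu Q HQ). unfold filtermap, within in *.
  revert Hu. apply filter_imp. intros y Hy Dy. exact (Hy (HD y Dy)).
Qed.

Lemma continuous_of_cont_within (D : R -> Prop) (u : R -> R) (x : R) :
  locally x D -> cont_within D u x -> continuous u x.
Proof.
  intros HD Hu. eapply filterlim_filter_le_1; [|exact Hu].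
  intros Q HQ. generalize (filter_and _ _ HD HQ). apply filter_imp.
  intros y [Dy HQy]. exact (HQy Dy).
Qed.

Lemma continuous_of_cont_within_nonneg (u : R -> R) (x : R) :
  0 < x -> cont_within Defs.nonneg u x -> continuous u x.
Proof.
  intros Hx. apply continuous_of_cont_within.
  exists (mkposreal x Hx). intros y Hy. change (Rabs (y - x) < x) in Hy.
  apply Rabs_def2 in Hy. unfold Defs.nonneg; lra.
Qed.

Lemma cont_within_nonneg_ge (w : R -> R) (c x : R) :
  0 < x -> cont_within Defs.nonneg w 0 -> (forall e, 0 < e < x -> c <= w e) -> c <= w 0.
Proof.
  intros Hx Hw Hc. apply Rnot_lt_le. intros Hlt.
  destruct (cont_within_eps _ _ _ Hw (c - w 0)) as [del [Hdel Hnear]]; [lra|].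
  pose proof (Rmin_l x del); pose proof (Rmin_r x del).
  assert (Hmin : 0 < Rmin x del) by (apply Rmin_pos; lra).
  assert (Hclose : Rabs (w (Rmin x del / 2) - w 0) < c - w 0).
  { apply Hnear; [unfold Defs.nonneg; lra|]. rewrite Rminus_0_r, Rabs_right; lra. }
  apply Rabs_def2 in Hclose. specialize (Hc (Rmin x del / 2)). lra.
Qed.

Lemma cont_within_nonneg_le (w : R -> R) (c x : R) :
  0 < x -> cont_within Defs.nonneg w 0 -> (forall e, 0 < e < x -> w e <= c) -> w 0 <= c.
Proof.
  intros Hx Hw Hc. apply Rnot_lt_le. intros Hlt.
  destruct (cont_within_eps _ _ _ Hw (w 0 - c)) as [del [Hdel Hnear]]; [lra|].
  pose proof (Rmin_l x del); pose proof (Rmin_r x del).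
  assert (Hmin : 0 < Rmin x del) by (apply Rmin_pos; lra).
  assert (Hclose : Rabs (w (Rmin x del / 2) - w 0) < w 0 - c).
  { apply Hnear; [unfold Defs.nonneg; lra|]. rewrite Rminus_0_r, Rabs_right; lra. }
  apply Rabs_def2 in Hclose. specialize (Hc (Rmin x del / 2)). lra.
Qed.

Lemma locally_lt_of_continuous (u : R -> R) (x c : R) :
  continuous u x -> u x < c -> locally x (fun y => u y < c).
Proof. intros Hu Hx. exact (Hu (fun v => v < c) (open_lt c (u x) Hx)). Qed.

Lemma locally_gt_of_continuous (u : R -> R) (x c : R) :
  continuous u x -> c < u x -> locally x (fun y => c < u y).
Proof. intros Hu Hx. exact (Hu (fun v => c < v) (open_gt c (u x) Hx)). Qed.

Lemma continuous_left_interval (u : R -> R) (lo x eps : R) :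
  lo < x -> continuous u x -> 0 < eps ->
  exists a, lo < a < x /\ forall y, a <= y <= x -> Rabs (u y - u x) < eps.
Proof.
  intros Hlo Hu Heps.
  destruct (continuous_eps u x Hu eps Heps) as [del [Hdel Hnear]].
  pose proof (Rmin_l del (x - lo)); pose proof (Rmin_r del (x - lo)).
  assert (0 < Rmin del (x - lo)) by (apply Rmin_pos; lra).
  exists (x - Rmin del (x - lo) / 2). split; [lra|].
  intros y Hy. apply Hnear. apply Rabs_def1; lra.
Qed.

Definition clamp (a b x : R) : R := Rmax a (Rmin x b).

Lemma clamp_in (a b x : R) : a <= b -> a <= clamp a b x <= b.
Proof. intros. unfold clamp, Rmax, Rmin. repeat destruct Rle_dec; lra. Qed.

Lemma clamp_id (a b x : R) : a <= x <= b -> clamp a b x = x.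
Proof. intros. unfold clamp, Rmax, Rmin. repeat destruct Rle_dec; lra. Qed.

Lemma clamp_le (a b x : R) : a <= b -> x <= a -> clamp a b x = a.
Proof. intros. unfold clamp, Rmax, Rmin. repeat destruct Rle_dec; lra. Qed.

Lemma clamp_ge (a b x : R) : a <= b -> b <= x -> clamp a b x = b.
Proof. intros. unfold clamp, Rmax, Rmin. repeat destruct Rle_dec; lra. Qed.

Lemma clamp_dist (a b x y : R) :
  a <= b -> Rabs (clamp a b y - clamp a b x) <= Rabs (y - x).
Proof.
  intros. unfold clamp, Rmax, Rmin. repeat destruct Rle_dec;
  unfold Rabs; repeat destruct Rcase_abs; lra.
Qed.

Lemma continuous_comp_clamp (a b : R) (u : R -> R) : a <= b ->
  (forall x, a <= x <= b -> cont_within (fun y => a <= y <= b) u x) ->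
  forall x, continuous (fun y => u (clamp a b y)) x.
Proof.
  intros Hab Hu x. apply continuous_of_eps. intros eps Heps.
  destruct (cont_within_eps _ _ _ (Hu _ (clamp_in a b x Hab)) eps Heps)
    as [del [Hdel Hnear]].
  exists del; split; [exact Hdel|]. intros y Hy.
  apply Hnear; [now apply clamp_in|].
  eapply Rle_lt_trans; [apply clamp_dist|]; assumption.
Qed.

Lemma continuous_of_is_derive (u : R -> R) (x l : R) : is_derive u x l -> continuous u x.
Proof.
  intros Hu. apply (ex_derive_continuous (K := R_AbsRing) (V := R_NormedModule)).
  now exists l.
Qed.

Lemma is_derive_eq (u : R -> R) (x l l' : R) : is_derive u x l -> is_derive u x l' -> l = l'.
Proof.
  intros H H'. apply is_derive_unique in H. apply is_derive_unique in H'. congruence.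
Qed.

Lemma mean_value (u : R -> R) (a b : R) : a < b ->
  (forall x, a < x < b -> exists l, is_derive u x l) ->
  continuous u a -> continuous u b ->
  exists x l, a < x < b /\ is_derive u x l /\ u b - u a = l * (b - a).
Proof.
  intros Hab Hd Ha Hb.
  assert (pr1 : forall x, a < x < b -> derivable_pt u x).
  { intros x Hx. destruct (constructive_indefinite_description _ (Hd x Hx)) as [l Hl].
    exists l. now apply is_derive_Reals. }
  assert (pr2 : forall x, a < x < b -> derivable_pt id x) by (intros; apply derivable_pt_id).
  destruct (MVT u id a b pr1 pr2 Hab) as [x [Hx E]].
  - intros x Hx. apply continuity_pt_filterlim.
    destruct (Req_dec x a) as [->|Hxa]; [exact Ha|].
    destruct (Req_dec x b) as [->|Hxb]; [exact Hb|].
    destruct (Hd x) as [l Hl]; [lra|]. exact (continuous_of_is_derive u x l Hl).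
  - intros x _. apply derivable_continuous_pt, derivable_pt_id.
  - destruct (Hd x Hx) as [l Hl]. exists x, l. split; [exact Hx|split; [exact Hl|]].
    rewrite (derive_pt_eq_0 u x l (pr1 x Hx)) in E by now apply is_derive_Reals.
    rewrite (derive_pt_eq_0 id x 1 (pr2 x Hx)) in E by apply derivable_pt_lim_id.
    unfold id in E. lra.
Qed.

Lemma increment_ge (u : R -> R) (a b c : R) : a < b ->
  (forall x, a < x < b -> exists l, is_derive u x l /\ c <= l) ->
  continuous u a -> continuous u b -> c * (b - a) <= u b - u a.
Proof.
  intros Hab Hd Ha Hb.
  destruct (mean_value u a b Hab) as [x [l [Hx [Hl ->]]]]; auto.
  { intros x Hx. destruct (Hd x Hx) as [l [Hl _]]. now exists l. }
  destruct (Hd x Hx) as [l' [Hl' Hc]].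
  rewrite (is_derive_eq _ _ _ _ Hl Hl').
  apply Rmult_le_compat_r; lra.
Qed.

Lemma increment_le (u : R -> R) (a b c : R) : a < b ->
  (forall x, a < x < b -> exists l, is_derive u x l /\ l <= c) ->
  continuous u a -> continuous u b -> u b - u a <= c * (b - a).
Proof.
  intros Hab Hd Ha Hb.
  destruct (mean_value u a b Hab) as [x [l [Hx [Hl ->]]]]; auto.
  { intros x Hx. destruct (Hd x Hx) as [l [Hl _]]. now exists l. }
  destruct (Hd x Hx) as [l' [Hl' Hc]].
  rewrite (is_derive_eq _ _ _ _ Hl Hl').
  apply Rmult_le_compat_r; lra.
Qed.

Lemma eq_of_derive_zero (u : R -> R) (a b : R) : a < b ->
  (forall x, a < x < b -> is_derive u x 0) -> continuous u a -> continuous u b ->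
  u b = u a.
Proof.
  intros Hab Hd Ha Hb.
  assert (0 * (b - a) <= u b - u a).
  { apply increment_ge; auto. intros x Hx. exists 0. split; [now apply Hd|lra]. }
  assert (u b - u a <= 0 * (b - a)).
  { apply increment_le; auto. intros x Hx. exists 0. split; [now apply Hd|lra]. }
  lra.
Qed.

Lemma derive_nonneg_le (u du : R -> R) (x y : R) : 0 < x <= y ->
  (forall z, 0 < z -> is_derive u z (du z)) -> (forall z, x < z < y -> 0 <= du z) ->
  u x <= u y.
Proof.
  intros Hxy Hd Hdu. destruct (Req_dec x y) as [->|Hne]; [lra|].
  assert (0 * (y - x) <= u y - u x); [|lra].
  apply increment_ge; [lra| | |].
  - intros z Hz. exists (du z). split; [apply Hd; lra|auto].
  - apply (continuous_of_is_derive _ _ _ (Hd x ltac:(lra))).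
  - apply (continuous_of_is_derive _ _ _ (Hd y ltac:(lra))).
Qed.

Lemma derive_pos_lt (u du : R -> R) (x y : R) : 0 < x < y ->
  (forall z, 0 < z -> is_derive u z (du z)) -> (forall z, x < z < y -> 0 < du z) ->
  u x < u y.
Proof.
  intros Hxy Hd Hdu.
  destruct (mean_value u x y) as [z [l [Hz [Hl E]]]].
  - lra.
  - intros z Hz. exists (du z). apply Hd; lra.
  - apply (continuous_of_is_derive _ _ _ (Hd x ltac:(lra))).
  - apply (continuous_of_is_derive _ _ _ (Hd y ltac:(lra))).
  - rewrite (is_derive_eq _ _ _ _ Hl (Hd z ltac:(lra))) in E.
    pose proof (Hdu z Hz). assert (0 < du z * (y - x)) by (apply Rmult_lt_0_compat; lra).
    lra.
Qed.

Lemma is_derive_exp_mul (u : R -> R) (c x l : R) : is_derive u x l ->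
  is_derive (fun y => exp (c * y) * u y) x (exp (c * x) * (c * u x + l)).
Proof.
  intros Hu. auto_derive; [now exists l|].
  replace (Derive (fun y => u y) x) with l by (symmetry; now apply is_derive_unique).
  ring.
Qed.

Lemma continuous_exp_mul (u : R -> R) (c x : R) :
  continuous u x -> continuous (fun y => exp (c * y) * u y) x.
Proof.
  intros Hu. apply (continuous_mult (fun y => exp (c * y)) u); [|exact Hu].
  apply (continuous_comp (fun y => c * y) exp); [|apply continuous_exp].
  apply (continuous_mult (fun _ => c) (fun y => y));
    [apply continuous_const|apply continuous_id].
Qed.

(* Gronwall: [exp (K x) * u x] is nondecreasing. *)
Lemma pos_of_derive_ge_linear (u : R -> R) (K a b : R) : a < b -> 0 < u a ->
  continuous u a -> continuous u b ->
  (forall x, a < x < b -> exists l, is_derive u x l /\ - K * u x <= l) -> 0 < u b.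
Proof.
  intros Hab Ha Hca Hcb Hd.
  assert (Hw : 0 * (b - a) <= exp (K * b) * u b - exp (K * a) * u a).
  { apply (increment_ge (fun y => exp (K * y) * u y)); auto using continuous_exp_mul.
    intros x Hx. destruct (Hd x Hx) as [l [Hl Hle]].
    eexists; split; [apply is_derive_exp_mul, Hl|].
    apply Rmult_le_pos; [left; apply exp_pos|lra]. }
  pose proof (exp_pos (K * a)); pose proof (exp_pos (K * b)).
  assert (0 < exp (K * a) * u a) by (apply Rmult_lt_0_compat; lra).
  destruct (Rlt_or_le 0 (u b)); [assumption|nra].
Qed.

Lemma derive_nonneg_at_left_max (u : R -> R) (s l rho : R) : 0 < rho -> is_derive u s l ->
  (forall x, s - rho < x < s -> u x <= u s) -> 0 <= l.
Proof.
  intros Hrho Hd Hmax. apply is_derive_Reals in Hd.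
  apply Rnot_lt_le. intros Hl.
  destruct (Hd (- l / 2)) as [del Hdel]; [lra|].
  assert (Hpos : 0 < Rmin del rho) by (apply Rmin_pos; [apply cond_pos|lra]).
  pose proof (Rmin_l del rho); pose proof (Rmin_r del rho).
  set (e := - Rmin del rho / 2).
  assert (He : e <> 0) by (unfold e; lra).
  assert (Hdiff := Hdel e He ltac:(unfold e; rewrite Rabs_left; lra)).
  assert (Hq : 0 <= (u (s + e) - u s) / e).
  { assert (u (s + e) <= u s) by (apply Hmax; unfold e; lra).
    replace ((u (s + e) - u s) / e) with ((u s - u (s + e)) / - e) by (field; lra).
    apply Rdiv_le_0_compat; unfold e in *; lra. }
  apply Rabs_def2 in Hdiff. lra.
Qed.

Lemma first_failure (G : R -> Prop) (lo a t : R) :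
  lo <= a <= t -> (forall s, lo <= s <= a -> G s) -> ~ G t ->
  exists Ts, a <= Ts <= t /\ (forall s, lo <= s < Ts -> G s) /\
    (forall rho, 0 < rho -> exists s, Ts <= s <= t /\ s < Ts + rho /\ ~ G s).
Proof.
  intros Ha HG Ht.
  set (E := fun x => lo <= x <= t /\ forall s, lo <= s <= x -> G s).
  assert (Hbound : bound E) by (exists t; intros x [Hx _]; lra).
  assert (Hne : exists x, E x) by (exists a; split; [lra|auto]).
  destruct (completeness E Hbound Hne) as [Ts [Hub Hlub]].
  assert (HaT : a <= Ts) by (apply Hub; split; [lra|auto]).
  assert (HTt : Ts <= t) by (apply Hlub; intros x [Hx _]; lra).
  assert (Hbefore : forall s, lo <= s < Ts -> G s).
  { intros s Hs. apply NNPP. intros Hn.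
    assert (Hs_ub : is_upper_bound E s).
    { intros x [Hx HGx]. apply Rnot_lt_le. intros Hxs. apply Hn, HGx. lra. }
    specialize (Hlub s Hs_ub). lra. }
  exists Ts. split; [lra|split; [exact Hbefore|]].
  intros rho Hrho. apply NNPP. intros Hn.
  assert (Hafter : forall s, Ts <= s <= t -> s < Ts + rho -> G s).
  { intros s Hs Hs'. apply NNPP. intros HGs. apply Hn. now exists s. }
  pose proof (Rmin_l (Ts + rho / 2) t); pose proof (Rmin_r (Ts + rho / 2) t).
  assert (lo <= Rmin (Ts + rho / 2) t) by (apply Rmin_glb; lra).
  assert (Ex : E (Rmin (Ts + rho / 2) t)).
  { split; [lra|]. intros s Hs.
    destruct (Rlt_or_le s Ts); [apply Hbefore|apply Hafter]; lra. }
  pose proof (Hub _ Ex).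
  assert (Rmin (Ts + rho / 2) t = t) by (unfold Rmin in *; destruct Rle_dec; lra).
  apply Ht, Hafter; lra.
Qed.

Lemma eventually_below (u : R -> R) (t0 beta kap : R) : kap < 0 ->
  (forall t, t0 < t -> continuous u t) ->
  (forall t, t0 < t -> beta <= u t -> exists l, is_derive u t l /\ l <= kap) ->
  exists t1, t1 >= t0 /\ forall t, t >= t1 -> u t < beta.
Proof.
  intros Hkap Hcont Hder.
  assert (Hcross : exists t1, t0 < t1 /\ u t1 < beta).
  { apply NNPP. intros Hnever.
    assert (Hall : forall t, t0 < t -> beta <= u t).
    { intros t Ht. apply Rnot_lt_le. intros Hlt. apply Hnever. now exists t. }
    set (a := t0 + 1).
    pose proof (Hall a ltac:(unfold a; lra)).
    assert (0 <= (u a - beta) / - kap) by (apply Rdiv_le_0_compat; lra).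
    set (X := a + (u a - beta) / - kap + 1).
    assert (Hdrop : u X - u a <= kap * (X - a)).
    { apply increment_le; [unfold X; lra| |apply Hcont; unfold a; lra
                          |apply Hcont; unfold X, a in *; lra].
      intros x Hx. apply Hder; [|apply Hall]; unfold X, a in *; lra. }
    replace (kap * (X - a)) with (- (u a - beta) + kap) in Hdrop by (unfold X; field; lra).
    pose proof (Hall X ltac:(unfold X, a in *; lra)). lra. }
  destruct Hcross as [t1 [Ht1 Hu1]].
  exists t1. split; [lra|]. intros t Ht. apply NNPP. intros Hfail.
  destruct (first_failure (fun s => u s < beta) t1 t1 t) as [Ts [HTs [Hbefore Hafter]]];
    [lra| |exact Hfail|].
  { intros s Hs. now replace s with t1 by lra. }
  assert (HuTs : beta <= u Ts).
  { apply Rnot_lt_le. intros Hlt.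
    destruct (locally_lt_of_continuous u Ts beta (Hcont Ts ltac:(lra)) Hlt) as [rho Hrho].
    destruct (Hafter rho (cond_pos rho)) as [s [Hs1 [Hs2 Hs3]]].
    apply Hs3, Hrho. change (Rabs (s - Ts) < rho). apply Rabs_def1; lra. }
  assert (Ht1Ts : t1 < Ts) by (destruct (Req_dec Ts t1) as [->|]; lra).
  destruct (Hder Ts ltac:(lra) HuTs) as [l [Hl Hlk]].
  assert (0 <= l); [|lra].
  apply (derive_nonneg_at_left_max u Ts l (Ts - t1)); [lra|exact Hl|].
  intros x Hx. assert (u x < beta) by (apply Hbefore; lra). lra.
Qed.

(** * Primitives and their inverses *)

Lemma ex_RInt_cont (r : R -> R) (a b : R) : (forall x, continuous r x) -> ex_RInt r a b.
Proof. intros Hr. apply (ex_RInt_continuous (V := R_CompleteNormedModule)); auto. Qed.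

Lemma is_derive_RInt_cont (r : R -> R) (a x : R) : (forall x, continuous r x) ->
  is_derive (fun y => RInt r a y) x (r x).
Proof.
  intros Hr. apply (is_derive_RInt (V := R_NormedModule) r _ a); [|apply Hr].
  apply filter_forall. intros y.
  apply (RInt_correct (V := R_CompleteNormedModule)), ex_RInt_cont, Hr.
Qed.

Lemma RInt_Chasles_cont (r : R -> R) (a b c : R) : (forall x, continuous r x) ->
  RInt r a b + RInt r b c = RInt r a c.
Proof. intros Hr. apply (RInt_Chasles (V := R_CompleteNormedModule)); apply ex_RInt_cont, Hr. Qed.

Lemma RInt_shift (r : R -> R) (a b t : R) : (forall x, continuous r x) ->
  RInt (fun y => r (y + t)) a b = RInt r (a + t) (b + t).
Proof.
  intros Hr. replace (a + t) with (1 * a + t) by ring. replace (b + t) with (1 * b + t) by ring.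
  rewrite <- (RInt_comp_lin (V := R_CompleteNormedModule) r 1 t a b) by apply ex_RInt_cont, Hr.
  apply RInt_ext. intros x _. change (r (x + t) = 1 * r (1 * x + t)). now rewrite !Rmult_1_l.
Qed.

Lemma RInt_reflect (r : R -> R) (c : R) : (forall x, continuous r x) ->
  RInt (fun s => r (c - s)) 0 c = RInt r 0 c.
Proof.
  intros Hr.
  assert (Hc : forall y, continuous (fun s => r (-1 * s + c)) y).
  { intros y. apply (continuous_comp (fun s => -1 * s + c) r); [|apply Hr].
    apply (continuous_plus (fun s => -1 * s) (fun _ => c)); [|apply continuous_const].
    apply (continuous_mult (fun _ => -1) (fun s => s));
      [apply continuous_const|apply continuous_id]. }
  assert (E := RInt_comp_lin (V := R_CompleteNormedModule) r (-1) c 0 c (ex_RInt_cont r _ _ Hr)).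
  replace (-1 * 0 + c) with c in E by ring. replace (-1 * c + c) with 0 in E by ring.
  rewrite (RInt_scal (V := R_CompleteNormedModule) _ 0 c (-1)) in E by apply ex_RInt_cont, Hc.
  rewrite <- (opp_RInt_swap (V := R_CompleteNormedModule) r 0 c (ex_RInt_cont r _ _ Hr)) in E.
  change (-1 * RInt (fun s => r (-1 * s + c)) 0 c = - RInt r 0 c) in E.
  rewrite (RInt_ext (fun s => r (c - s)) (fun s => r (-1 * s + c))); [lra|].
  intros x _. f_equal. ring.
Qed.

Lemma RInt_lt_mono (r : R -> R) (x y : R) :
  (forall x, continuous r x) -> (forall x, 0 < r x) -> x < y -> RInt r 0 x < RInt r 0 y.
Proof.
  intros Hc Hp Hxy.
  destruct (mean_value (fun z => RInt r 0 z) x y) as [z [l [Hz [Hl E]]]].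
  - exact Hxy.
  - intros z _. exists (r z). now apply is_derive_RInt_cont.
  - exact (continuous_of_is_derive _ _ _ (is_derive_RInt_cont r 0 x Hc)).
  - exact (continuous_of_is_derive _ _ _ (is_derive_RInt_cont r 0 y Hc)).
  - rewrite (is_derive_eq _ _ _ _ Hl (is_derive_RInt_cont r 0 z Hc)) in E.
    pose proof (Hp z). assert (0 < r z * (y - x)) by (apply Rmult_lt_0_compat; lra). lra.
Qed.

Lemma RInt_lt_reflect (r : R -> R) (x y : R) :
  (forall x, continuous r x) -> (forall x, 0 < r x) -> RInt r 0 x < RInt r 0 y -> x < y.
Proof.
  intros Hc Hp H. apply Rnot_le_lt. intros Hyx. destruct (Req_dec y x) as [->|Hne]; [lra|].
  pose proof (RInt_lt_mono r y x Hc Hp ltac:(lra)). lra.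
Qed.

Section PrimitiveInverse.

Variables (r : R -> R) (b : R).
Hypotheses (Hr_cont : forall x, continuous r x) (Hr_pos : forall x, 0 < r x)
  (Hr_hi : forall x, b <= x -> r x = r b) (Hr_lo : forall x, x <= 0 -> r x = r 0).

Lemma RInt_above (x : R) : b <= x -> RInt r 0 x = RInt r 0 b + r b * (x - b).
Proof.
  intros Hx. rewrite <- (RInt_Chasles_cont r 0 b x Hr_cont).
  rewrite (RInt_ext r (fun _ => r b) b x), RInt_const; [apply Rplus_eq_compat_l, Rmult_comm|].
  intros y Hy. rewrite Rmin_left in Hy by lra. apply Hr_hi; lra.
Qed.

Lemma RInt_below (x : R) : x <= 0 -> RInt r 0 x = r 0 * x.
Proof.
  intros Hx. rewrite (RInt_ext r (fun _ => r 0)), RInt_const.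
  - change ((x - 0) * r 0 = r 0 * x). ring.
  - intros y Hy. rewrite Rmax_left in Hy by lra. apply Hr_lo; lra.
Qed.

Lemma RInt_surjective (s : R) : exists x, RInt r 0 x = s.
Proof.
  set (Q := fun x => RInt r 0 x).
  assert (HQ : continuity Q).
  { intros x. apply continuity_pt_filterlim.
    exact (continuous_of_is_derive _ _ _ (is_derive_RInt_cont r 0 x Hr_cont)). }
  pose proof (Hr_pos 0); pose proof (Hr_pos b).
  set (x1 := b + Rabs (s - Q b) / r b).
  set (x2 := - Rabs s / r 0).
  assert (Hx1 : s <= Q x1).
  { assert (0 <= Rabs (s - Q b) / r b) by (apply Rdiv_le_0_compat; [apply Rabs_pos|lra]).
    change (s <= RInt r 0 x1). rewrite RInt_above by (unfold x1; lra). unfold x1.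
    replace (r b * (b + Rabs (s - Q b) / r b - b)) with (Rabs (s - Q b)) by (field; lra).
    pose proof (Rle_abs (s - Q b)). unfold Q in *. lra. }
  assert (Hx2 : Q x2 <= s).
  { assert (0 <= Rabs s / r 0) by (apply Rdiv_le_0_compat; [apply Rabs_pos|lra]).
    change (RInt r 0 x2 <= s). rewrite RInt_below by (unfold x2, Rdiv in *; lra). unfold x2.
    replace (r 0 * (- Rabs s / r 0)) with (- Rabs s) by (field; lra).
    pose proof (Rle_abs (- s)). rewrite Rabs_Ropp in *. lra. }
  destruct (IVT_gen Q x1 x2 s HQ) as [x [_ Hx]].
  - split; [apply Rle_trans with (Q x2); [apply Rmin_r|lra]
           |apply Rle_trans with (Q x1); [lra|apply Rmax_l]].
  - now exists x.
Qed.

Definition RInt_inv (s : R) : R := epsilon (inhabits 0) (fun x => RInt r 0 x = s).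

Lemma RInt_RInt_inv (s : R) : RInt r 0 (RInt_inv s) = s.
Proof. unfold RInt_inv. apply epsilon_spec, RInt_surjective. Qed.

Lemma RInt_inv_RInt (x : R) : RInt_inv (RInt r 0 x) = x.
Proof.
  pose proof (RInt_RInt_inv (RInt r 0 x)) as E.
  destruct (Rtotal_order x (RInt_inv (RInt r 0 x))) as [H|[H|H]]; [|auto|];
    apply (RInt_lt_mono r _ _ Hr_cont Hr_pos) in H; lra.
Qed.

Lemma continuous_RInt_inv (s : R) : continuous RInt_inv s.
Proof.
  apply continuous_of_eps. intros eps Heps.
  set (x0 := RInt_inv s).
  set (Q := fun x => RInt r 0 x).
  assert (H1 : Q (x0 - eps) < Q x0) by (apply RInt_lt_mono; auto; lra).
  assert (H2 : Q x0 < Q (x0 + eps)) by (apply RInt_lt_mono; auto; lra).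
  exists (Rmin (Q x0 - Q (x0 - eps)) (Q (x0 + eps) - Q x0)).
  split; [apply Rmin_pos; lra|].
  intros y Hy. apply Rabs_def2 in Hy.
  pose proof (Rmin_l (Q x0 - Q (x0 - eps)) (Q (x0 + eps) - Q x0)).
  pose proof (Rmin_r (Q x0 - Q (x0 - eps)) (Q (x0 + eps) - Q x0)).
  assert (Ex0 : Q x0 = s) by apply RInt_RInt_inv.
  assert (Ey : Q (RInt_inv y) = y) by apply RInt_RInt_inv.
  assert (x0 - eps < RInt_inv y).
  { apply (RInt_lt_reflect r); auto. change (Q (x0 - eps) < Q (RInt_inv y)). lra. }
  assert (RInt_inv y < x0 + eps).
  { apply (RInt_lt_reflect r); auto. change (Q (RInt_inv y) < Q (x0 + eps)). lra. }
  apply Rabs_def1; fold x0; lra.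
Qed.

End PrimitiveInverse.

Lemma RInt_scal_cont (r : R -> R) (a b c : R) : (forall x, continuous r x) ->
  RInt (fun x => c * r x) a b = c * RInt r a b.
Proof. intros Hr. apply (RInt_scal (V := R_CompleteNormedModule)), ex_RInt_cont, Hr. Qed.

(** * Consequences of the standing assumptions *)

Lemma sat_fh_continuous (u du : R -> R) (x : R) : sat_fh u du -> 0 < x -> continuous u x.
Proof. intros [[Hd _] _] Hx. exact (continuous_of_is_derive _ _ _ (Hd x Hx)). Qed.

Lemma sat_fh_nonneg (u du : R -> R) (x : R) : sat_fh u du -> 0 <= x -> 0 <= u x.
Proof. intros [_ [Hu _]]. exact (Hu x). Qed.

Lemma sat_fh_le (u du : R -> R) (x y : R) : sat_fh u du -> 0 <= x <= y -> u x <= u y.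
Proof.
  intros [[Hd _] [Hu [Hu0 [Hdu _]]]] Hxy.
  destruct (Req_dec x 0) as [->|Hx0]; [rewrite Hu0; apply Hu; lra|].
  apply (derive_nonneg_le u du); [lra|exact Hd|]. intros z Hz. left; apply Hdu; lra.
Qed.

Lemma sat_fh_lt (u du : R -> R) (x y : R) : sat_fh u du -> 0 <= x < y -> u x < u y.
Proof.
  intros Hsat Hxy. pose proof Hsat as [[Hd _] [_ [Hu0 [Hdu _]]]].
  assert (Hlt : forall x, 0 < x < y -> u x < u y).
  { intros z Hz. apply (derive_pos_lt u du); [lra|exact Hd|]. intros w Hw; apply Hdu; lra. }
  destruct (Req_dec x 0) as [->|Hx0]; [|apply Hlt; lra].
  apply Rle_lt_trans with (u (y / 2)); [apply (sat_fh_le u du); auto; lra|apply Hlt; lra].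
Qed.

Lemma sat_fh_small_near_0 (u du : R -> R) (c : R) : sat_fh u du -> 0 < c ->
  exists eta, 0 < eta /\ forall x, 0 <= x < eta -> u x < c.
Proof.
  intros [[_ [_ Hc0]] [_ [Hu0 _]]] Hc.
  destruct (cont_within_eps _ _ _ Hc0 c Hc) as [eta [Heta Hnear]].
  exists eta. split; [exact Heta|]. intros x Hx.
  assert (Hclose : Rabs (u x - u 0) < c).
  { apply Hnear; [unfold Defs.nonneg; lra|]. rewrite Rminus_0_r, Rabs_right; lra. }
  rewrite Hu0, Rminus_0_r in Hclose. apply Rabs_def2 in Hclose. lra.
Qed.

(* [u' < |u'(0)| + 1] near 0 and [u 0 = 0] give a linear bound. *)
Lemma sat_fh_linear_near_0 (u du : R -> R) : sat_fh u du ->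
  exists L eta, 0 < eta /\ forall x, 0 <= x < eta -> u x <= L * x.
Proof.
  intros [[Hd [Hdc Hc0]] [_ [Hu0 _]]].
  set (L := Rabs (du 0) + 1).
  destruct (cont_within_eps _ _ _ (Hdc 0 (Rle_refl 0)) 1 Rlt_0_1) as [eta [Heta Hnear]].
  exists L, eta. split; [exact Heta|]. intros x Hx.
  destruct (Req_dec x 0) as [->|Hx0]; [rewrite Hu0; lra|].
  assert (Hinc : forall e, 0 < e < x -> u x - L * x <= u e).
  { intros e He.
    assert (u x - u e <= L * (x - e)).
    { apply increment_le; [lra| |apply (continuous_of_is_derive _ _ _ (Hd e ltac:(lra)))
                              |apply (continuous_of_is_derive _ _ _ (Hd x ltac:(lra)))].
      intros z Hz. exists (du z). split; [apply Hd; lra|].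
      assert (Hclose : Rabs (du z - du 0) < 1).
      { apply Hnear; [unfold Defs.nonneg; lra|]. rewrite Rminus_0_r, Rabs_right; lra. }
      apply Rabs_def2 in Hclose. pose proof (Rle_abs (du 0)). unfold L; lra. }
    assert (0 <= L * e) by (apply Rmult_le_pos; [pose proof (Rabs_pos (du 0)); unfold L|]; lra).
    lra. }
  pose proof (cont_within_nonneg_ge u (u x - L * x) x ltac:(lra) Hc0 Hinc). lra.
Qed.

Lemma sat_R_continuous (u du : R -> R) (x : R) : sat_R u du -> 0 < x -> continuous u x.
Proof. intros [[Hd _] _] Hx. exact (continuous_of_is_derive _ _ _ (Hd x Hx)). Qed.

(* If [u x = 0] then [u] vanishes on [[0, x]], so [u 0 = 0] and [u' 0 > 0], which makes [u]
   strictly increasing near 0. *)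
Lemma sat_R_pos (u du : R -> R) (x : R) : sat_R u du -> 0 < x -> 0 < u x.
Proof.
  intros [[Hd [Hdc Hc0]] [Hu [Hdu [Hdu0 _]]]] Hx.
  assert (Hmono : forall y, 0 < y <= x -> u y <= u x).
  { intros y Hy. apply (derive_nonneg_le u du); auto. intros z Hz; apply Hdu; lra. }
  apply Rnot_le_lt. intros Hux.
  assert (Hzero : forall y, 0 < y <= x -> u y = 0).
  { intros y Hy. pose proof (Hmono y Hy). pose proof (Hu y ltac:(lra)). lra. }
  assert (Hu0 : u 0 = 0).
  { pose proof (Hu 0 (Rle_refl 0)).
    pose proof (cont_within_nonneg_le u 0 x Hx Hc0 ltac:(intros e He; rewrite Hzero; lra)).
    lra. }
  specialize (Hdu0 Hu0).
  destruct (cont_within_eps _ _ _ (Hdc 0 (Rle_refl 0)) (du 0)) as [eta [Heta Hnear]];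
    [exact Hdu0|].
  pose proof (Rmin_l x eta); pose proof (Rmin_r x eta).
  assert (0 < Rmin x eta) by (apply Rmin_pos; lra).
  assert (Hlt : u (Rmin x eta / 2) < u (Rmin x eta)).
  { apply (derive_pos_lt u du); [lra|exact Hd|]. intros z Hz.
    assert (Hclose : Rabs (du z - du 0) < du 0).
    { apply Hnear; [unfold Defs.nonneg; lra|]. rewrite Rminus_0_r, Rabs_right; lra. }
    apply Rabs_def2 in Hclose. lra. }
  rewrite !Hzero in Hlt by lra. lra.
Qed.

(** * The TDE model *)

Section Model.

Context {mu lambda g gamma delta delta0 m NT : R} {f fd h hd Rf Rd : R -> R}
  {t0 : R} {phi1 phi2 phi3 N P Z : R -> R}.

Hypotheses (Hmu : mu > lambda) (Hlam : lambda > 0) (Hg : g > 0) (Hgamma : 0 < gamma <= 1)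
  (Hdelta : delta > 0) (Hdelta0 : delta0 >= 0) (Hm : m > 0)
  (Hf : sat_fh f fd) (Hh : sat_fh h hd) (HR : sat_R Rf Rd)
  (Hphi : in_D Rf h gamma g delta0 m NT t0 phi1 phi2 phi3)
  (Hsol : is_solution f h Rf mu lambda g gamma delta delta0 m NT t0
            phi1 phi2 phi3 N P Z).

Lemma t0_pos : 0 < t0.
Proof. now destruct Hphi. Qed.

Lemma initial_pos (s : R) : 0 <= s <= t0 -> 0 < N s /\ 0 < P s /\ 0 < Z s.
Proof.
  intros Hs. destruct Hphi as [_ [Hphi_pos _]]. destruct Hsol as [Hinit _].
  destruct (Hinit s Hs) as [-> [-> ->]].
  destruct (Hphi_pos (s - t0) ltac:(lra)) as [_ [_ [_ Hpos]]]. exact Hpos.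
Qed.

Lemma solution_continuous (t : R) :
  0 < t -> continuous N t /\ continuous P t /\ continuous Z t.
Proof.
  intros Ht. destruct Hsol as [_ [Hcont _]]. destruct (Hcont t ltac:(lra)) as [HN [HP HZ]].
  split; [|split]; now apply continuous_of_cont_within_nonneg.
Qed.

Section Conservation.

Variable b : R.
Hypotheses (Hb : t0 < b) (Hpos : forall s, 0 <= s <= b -> 0 < N s /\ 0 < P s /\ 0 < Z s).

(* [P] and [Z] are frozen outside [[0, b]], so that [Q] is an increasing bijection of [R]
   with continuous inverse [T]. *)
Let Pb (x : R) : R := P (clamp 0 b x).
Let Zb (x : R) : R := Z (clamp 0 b x).
Let r (x : R) : R := Rf (Pb x).
Let Q (x : R) : R := RInt r 0 x.
Let T (s : R) : R := RInt_inv r s.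
Let k (s : R) : R := exp (delta0 * T s) * (gamma * g * Zb (T s) * h (Pb (T s))) / r (T s).
Let K (s : R) : R := RInt k 0 s.
Let V (t : R) : R :=
  exp (delta0 * t) * (N t + P t + Z t - NT) + (K (Q t) - K (Q t - m)).

Lemma Pb_pos (x : R) : 0 < Pb x.
Proof. apply Hpos, clamp_in. pose proof t0_pos; lra. Qed.

Lemma Zb_pos (x : R) : 0 < Zb x.
Proof. apply Hpos, clamp_in. pose proof t0_pos; lra. Qed.

Lemma Pb_continuous (x : R) : continuous Pb x.
Proof.
  apply continuous_comp_clamp; [pose proof t0_pos; lra|]. intros y Hy.
  destruct Hsol as [_ [Hcont _]].
  apply (cont_within_subset Defs.nonneg); [intros z Hz; unfold Defs.nonneg; lra|].
  apply Hcont; lra.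
Qed.

Lemma Zb_continuous (x : R) : continuous Zb x.
Proof.
  apply continuous_comp_clamp; [pose proof t0_pos; lra|]. intros y Hy.
  destruct Hsol as [_ [Hcont _]].
  apply (cont_within_subset Defs.nonneg); [intros z Hz; unfold Defs.nonneg; lra|].
  apply Hcont; lra.
Qed.

Lemma r_continuous (x : R) : continuous r x.
Proof.
  apply (continuous_comp Pb Rf); [apply Pb_continuous|].
  apply (sat_R_continuous _ _ _ HR), Pb_pos.
Qed.

Lemma r_pos (x : R) : 0 < r x.
Proof. apply (sat_R_pos _ _ _ HR), Pb_pos. Qed.

Lemma r_above (x : R) : b <= x -> r x = r b.
Proof. intros Hx. pose proof t0_pos. unfold r, Pb. rewrite !clamp_ge; lra. Qed.

Lemma r_below (x : R) : x <= 0 -> r x = r 0.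
Proof. intros Hx. pose proof t0_pos. unfold r, Pb. rewrite !clamp_le; lra. Qed.

Lemma T_Q (x : R) : T (Q x) = x.
Proof. exact (RInt_inv_RInt r b r_continuous r_pos r_above r_below x). Qed.

Lemma T_continuous (s : R) : continuous T s.
Proof. exact (continuous_RInt_inv r b r_continuous r_pos r_above r_below s). Qed.

Lemma is_derive_Q (x : R) : is_derive Q x (r x).
Proof. exact (is_derive_RInt_cont r 0 x r_continuous). Qed.

Lemma k_continuous (s : R) : continuous k s.
Proof.
  assert (HPT : continuous (fun s => Pb (T s)) s)
    by (apply (continuous_comp T Pb); [apply T_continuous|apply Pb_continuous]).
  unfold k, Rdiv.
  apply (continuous_mult (fun s => exp (delta0 * T s) * (gamma * g * Zb (T s) * h (Pb (T s))))
                         (fun s => / r (T s))).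
  - apply (continuous_mult (fun s => exp (delta0 * T s))
                           (fun s => gamma * g * Zb (T s) * h (Pb (T s)))).
    + apply (continuous_comp (fun s => delta0 * T s) exp); [|apply continuous_exp].
      apply (continuous_mult (fun _ => delta0) T); [apply continuous_const|apply T_continuous].
    + apply (continuous_mult (fun s => gamma * g * Zb (T s)) (fun s => h (Pb (T s)))).
      * apply (continuous_mult (fun _ => gamma * g) (fun s => Zb (T s)));
          [apply continuous_const|].
        apply (continuous_comp T Zb); [apply T_continuous|apply Zb_continuous].
      * apply (continuous_comp (fun s => Pb (T s)) h); [exact HPT|].
        apply (sat_fh_continuous _ _ _ Hh), Pb_pos.
  - apply (continuous_Rinv_comp (fun s => r (T s))); [|apply Rgt_not_eq, r_pos].
    apply (continuous_comp T r); [apply T_continuous|apply r_continuous].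
Qed.

Lemma k_nonneg (s : R) : 0 <= k s.
Proof.
  unfold k. apply Rdiv_le_0_compat; [|apply r_pos].
  pose proof (exp_pos (delta0 * T s)). pose proof (Zb_pos (T s)).
  pose proof (sat_fh_nonneg _ _ (Pb (T s)) Hh (Rlt_le _ _ (Pb_pos (T s)))).
  repeat apply Rmult_le_pos; lra.
Qed.

Lemma is_derive_K (s : R) : is_derive K s (k s).
Proof. exact (is_derive_RInt_cont k 0 s k_continuous). Qed.

Lemma Q_delay (t tau : R) : t0 < t < b -> is_delay Rf P t m tau ->
  Q (t - tau) = Q t - m /\ 0 <= t - tau <= t.
Proof.
  intros Ht [Htau Hint].
  assert (Hshift : RInt (fun u => Rf (P (t + u))) (- tau) 0
                   = RInt (fun y => r (y + t)) (- tau) 0).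
  { apply RInt_ext. intros x Hx. rewrite Rmin_left, Rmax_right in Hx by lra.
    unfold r, Pb. rewrite clamp_id by lra. do 2 f_equal. ring. }
  rewrite Hshift, RInt_shift in Hint by exact r_continuous.
  replace (- tau + t) with (t - tau) in Hint by ring. rewrite Rplus_0_l in Hint.
  pose proof (RInt_Chasles_cont r 0 (t - tau) t r_continuous). unfold Q. split; lra.
Qed.

Lemma RInt_phi2 (a c : R) : - t0 <= a <= 0 -> - t0 <= c <= 0 ->
  RInt (fun u => Rf (phi2 u)) a c = Q (c + t0) - Q (a + t0).
Proof.
  intros Ha Hc. destruct Hsol as [Hinit _].
  rewrite (RInt_ext _ (fun u => r (u + t0))).
  - rewrite RInt_shift by exact r_continuous.
    pose proof (RInt_Chasles_cont r 0 (a + t0) (c + t0) r_continuous). unfold Q. lra.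
  - intros x Hx.
    assert (Rmin a c >= - t0) by (apply Rle_ge, Rmin_glb; lra).
    assert (Rmax a c <= 0) by (apply Rmax_lub; lra).
    unfold r, Pb. rewrite clamp_id by lra.
    destruct (Hinit (x + t0)) as [_ [-> _]]; [lra|]. do 2 f_equal. ring.
Qed.

Lemma Q_t0 : Q t0 = m.
Proof.
  pose proof t0_pos. destruct Hphi as [_ [_ [Hm0 _]]].
  rewrite RInt_phi2 in Hm0 by lra.
  replace (- t0 + t0) with 0 in Hm0 by ring. rewrite Rplus_0_l in Hm0.
  assert (Q 0 = 0) by exact (RInt_point (V := R_CompleteNormedModule) 0 r). lra.
Qed.

Lemma T_initial (s d : R) : 0 <= d <= t0 -> RInt (fun u => Rf (phi2 u)) (- d) 0 = s ->
  T (m - s) = t0 - d.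
Proof.
  intros Hd Hs. rewrite RInt_phi2 in Hs by lra.
  rewrite <- Q_t0, <- Hs, Rplus_0_l. replace (- d + t0) with (t0 - d) by ring.
  replace (Q t0 - (Q t0 - Q (t0 - d))) with (Q (t0 - d)) by ring. apply T_Q.
Qed.

(* In [D_{N_T}] the delay [tau s] is [t0 - T (m - s)], so the initial integral is
   [exp (- delta0 t0) * K m] after the substitution [s -> m - s]. *)
Lemma K_m : K m = exp (delta0 * t0) * (NT - (phi1 0 + phi2 0 + phi3 0)).
Proof.
  pose proof t0_pos.
  destruct Hphi as [_ [_ [_ [tau [Htau HNT]]]]]. destruct Hsol as [Hinit _].
  rewrite HNT, Rplus_minus_l.
  rewrite (RInt_ext _ (fun s => exp (- delta0 * t0) * k (m - s))).
  - assert (Hkm : forall x, continuous (fun s => k (m - s)) x).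
    { intros x. apply (continuous_comp (fun s => m - s) k); [|apply k_continuous].
      apply (continuous_minus (fun _ => m) (fun s => s));
        [apply continuous_const|apply continuous_id]. }
    rewrite (RInt_scal_cont (fun s : R => k (m - s)) _ _ _ Hkm), (RInt_reflect k m k_continuous).
    rewrite <- Rmult_assoc, <- exp_plus. replace (delta0 * t0 + - delta0 * t0) with 0 by ring.
    rewrite exp_0, Rmult_1_l. reflexivity.
  - intros s Hs. rewrite Rmin_left, Rmax_right in Hs by lra.
    match goal with |- ?lhs = ?rhs => change (@eq R lhs rhs) end.
    destruct (Htau s ltac:(lra)) as [Hd Hint].
    unfold k. rewrite (T_initial s (tau s) Hd Hint). unfold r, Pb, Zb.
    rewrite clamp_id by lra.
    destruct (Hinit (t0 - tau s)) as [_ [HP HZ]]; [lra|].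
    assert (HRf : 0 < Rf (P (t0 - tau s))) by (apply (sat_R_pos _ _ _ HR), Hpos; lra).
    replace (t0 - tau s - t0) with (- tau s) in HP, HZ by ring.
    rewrite HP, HZ in *.
    replace (delta0 * (t0 - tau s)) with (delta0 * t0 + - delta0 * tau s) by ring.
    rewrite exp_plus. replace (- delta0 * t0) with (- (delta0 * t0)) by ring.
    rewrite exp_Ropp. pose proof (exp_pos (delta0 * t0)). field; split; lra.
Qed.

Lemma V_t0 : V t0 = 0.
Proof.
  pose proof t0_pos. destruct Hsol as [Hinit _].
  destruct (Hinit t0) as [HN [HP HZ]]; [lra|].
  unfold V. rewrite Q_t0, K_m, HN, HP, HZ, !Rminus_diag.
  assert (K 0 = 0) by exact (RInt_point (V := R_CompleteNormedModule) 0 k). lra.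
Qed.

Lemma V_continuous_t0 : continuous V t0.
Proof.
  destruct (solution_continuous t0 t0_pos) as [HN [HP HZ]].
  assert (HKQ : forall c, continuous (fun t => K (Q t - c)) t0).
  { intros c. apply (continuous_comp (fun t => Q t - c) K).
    - apply (continuous_minus Q (fun _ => c)); [|apply continuous_const].
      exact (continuous_of_is_derive _ _ _ (is_derive_Q t0)).
    - exact (continuous_of_is_derive _ _ _ (is_derive_K _)). }
  unfold V.
  apply (continuous_plus (fun t => exp (delta0 * t) * (N t + P t + Z t - NT))
                         (fun t => K (Q t) - K (Q t - m))).
  - apply (continuous_exp_mul (fun t => N t + P t + Z t - NT)).
    apply (continuous_minus (fun t => N t + P t + Z t) (fun _ => NT)); [|apply continuous_const].
    apply (continuous_plus (fun t => N t + P t) Z); [|exact HZ].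
    now apply (continuous_plus N P).
  - apply (continuous_minus (fun t => K (Q t)) (fun t => K (Q t - m))); [|apply HKQ].
    apply (continuous_ext (fun t => K (Q t - 0))); [intros t; now rewrite Rminus_0_r|apply HKQ].
Qed.

Lemma V_derive (t : R) : t0 < t < b -> is_derive V t 0.
Proof.
  intros Ht. destruct Hsol as [_ [_ Hder]].
  destruct (Hder t ltac:(lra)) as [HdN [HdP [tau [Hdelay HdZ]]]].
  destruct (Q_delay t tau Ht Hdelay) as [HQ Htau].
  unfold V. auto_derive.
  { split; [eexists; exact HdN|]. split; [eexists; exact HdP|].
    split; [eexists; exact HdZ|]. split; [eexists; apply is_derive_K|].
    split; [eexists; apply is_derive_Q|]. split; [eexists; apply is_derive_K|].
    split; [eexists; apply is_derive_Q|exact I]. }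
  rewrite (is_derive_unique (fun x : R => N x) t _ HdN).
  rewrite (is_derive_unique (fun x : R => P x) t _ HdP).
  rewrite (is_derive_unique (fun x : R => Z x) t _ HdZ).
  rewrite (is_derive_unique (fun x : R => Q x) t _ (is_derive_Q t)).
  rewrite (is_derive_unique (fun x : R => K x) _ _ (is_derive_K (Q t))).
  rewrite (is_derive_unique (fun x : R => K x) _ _ (is_derive_K (Q t + - m))).
  replace (Q t + - m) with (Q (t - tau)) by lra.
  unfold k. rewrite (T_Q t), (T_Q (t - tau)). unfold r, Pb, Zb.
  rewrite (clamp_id 0 b t), (clamp_id 0 b (t - tau)) by lra.
  replace (delta0 * (t - tau)) with (delta0 * t + - delta0 * tau) by ring. rewrite exp_plus.
  assert (0 < Rf (P t)) by (apply (sat_R_pos _ _ _ HR), Hpos; lra).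
  assert (0 < Rf (P (t - tau))) by (apply (sat_R_pos _ _ _ HR), Hpos; lra).
  field. lra.
Qed.

Theorem total_le_NT (t : R) : t0 < t < b -> N t + P t + Z t <= NT.
Proof.
  intros Ht.
  assert (HVt : V t = 0).
  { rewrite <- V_t0. apply eq_of_derive_zero; [lra| |apply V_continuous_t0|].
    - intros x Hx. apply V_derive; lra.
    - exact (continuous_of_is_derive _ _ _ (V_derive t Ht)). }
  assert (HK : 0 <= K (Q t) - K (Q t - m)).
  { unfold K. rewrite <- (RInt_Chasles_cont k 0 (Q t - m) (Q t) k_continuous).
    assert (0 <= RInt k (Q t - m) (Q t)); [|lra].
    apply RInt_ge_0; [lra|apply ex_RInt_cont, k_continuous|intros; apply k_nonneg]. }
  unfold V in HVt. pose proof (exp_pos (delta0 * t)).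
  apply Rnot_lt_le. intros Hlt.
  assert (0 < exp (delta0 * t) * (N t + P t + Z t - NT)) by (apply Rmult_lt_0_compat; lra).
  lra.
Qed.

End Conservation.

Lemma Z_pos_at (Ts : R) : t0 < Ts ->
  (forall s, 0 <= s < Ts -> 0 < N s /\ 0 < P s /\ 0 < Z s) -> 0 < Z Ts.
Proof.
  intros HTs Hbefore. pose proof t0_pos. destruct Hsol as [_ [_ Hder]].
  apply (pos_of_derive_ge_linear Z delta t0 Ts); [lra|apply initial_pos; lra
    |apply solution_continuous; lra|apply solution_continuous; lra|].
  intros x Hx. destruct (Hder x ltac:(lra)) as [_ [_ [tau [[Htau _] HdZ]]]].
  eexists; split; [exact HdZ|].
  destruct (Hbefore x ltac:(lra)) as [_ [HPx _]].
  destruct (Hbefore (x - tau) ltac:(lra)) as [_ [HPd HZd]].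
  assert (0 <= Rf (P x) * exp (- delta0 * tau) * (gamma * g * Z (x - tau) * h (P (x - tau)))
               / Rf (P (x - tau))); [|lra].
  apply Rdiv_le_0_compat; [|now apply (sat_R_pos _ _ _ HR)].
  pose proof (sat_R_pos _ _ _ HR HPx). pose proof (exp_pos (- delta0 * tau)).
  pose proof (sat_fh_nonneg _ _ (P (x - tau)) Hh ltac:(lra)).
  repeat apply Rmult_le_pos; lra.
Qed.

(* Near a zero of [N], [f N < lambda / mu], so [N' >= P (lambda - mu f N) >= 0]. *)
Lemma N_pos_at (Ts : R) : t0 < Ts ->
  (forall s, 0 <= s < Ts -> 0 < N s /\ 0 < P s /\ 0 < Z s) -> 0 < N Ts.
Proof.
  intros HTs Hbefore. pose proof t0_pos. destruct Hsol as [_ [_ Hder]].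
  destruct (solution_continuous Ts ltac:(lra)) as [HNc _].
  apply Rnot_le_lt. intros HN.
  destruct (sat_fh_small_near_0 f fd (lambda / mu) Hf) as [eta [Heta Hsmall]];
    [apply Rdiv_lt_0_compat; lra|].
  destruct (continuous_left_interval N t0 Ts eta HTs HNc Heta) as [a [Ha Hclose]].
  assert (0 < N Ts); [|lra].
  apply (pos_of_derive_ge_linear N 0 a Ts); [lra|apply Hbefore; lra
    |apply solution_continuous; lra|exact HNc|].
  intros x Hx. destruct (Hder x ltac:(lra)) as [HdN _].
  eexists; split; [exact HdN|].
  destruct (Hbefore x ltac:(lra)) as [HNx [HPx HZx]].
  assert (Htot : N x + P x + Z x <= NT).
  { apply (total_le_NT ((x + Ts) / 2)); [lra|intros s Hs; apply Hbefore; lra|lra]. }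
  assert (Hfx : mu * f (N x) < lambda).
  { specialize (Hclose x ltac:(lra)). apply Rabs_def2 in Hclose.
    assert (f (N x) < lambda / mu) by (apply Hsmall; lra).
    replace lambda with (mu * (lambda / mu)) by (field; lra).
    apply Rmult_lt_compat_l; lra. }
  pose proof (sat_fh_nonneg _ _ (P x) Hh ltac:(lra)).
  assert (0 <= (1 - gamma) * g * Z x * h (P x)) by (repeat apply Rmult_le_pos; lra).
  assert (0 <= delta0 * (NT - N x - P x - Z x)) by (apply Rmult_le_pos; lra).
  assert (0 < P x * (lambda - mu * f (N x))) by (apply Rmult_lt_0_compat; lra).
  assert (0 <= delta * Z x) by (apply Rmult_le_pos; lra).
  nra.
Qed.

(* Near a zero of [P], [h P <= L P] and [Z] is bounded, so [P' >= - K P]. *)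
Lemma P_pos_at (Ts : R) : t0 < Ts ->
  (forall s, 0 <= s < Ts -> 0 < N s /\ 0 < P s /\ 0 < Z s) -> 0 < P Ts.
Proof.
  intros HTs Hbefore. pose proof t0_pos. destruct Hsol as [_ [_ Hder]].
  destruct (solution_continuous Ts ltac:(lra)) as [_ [HPc HZc]].
  apply Rnot_le_lt. intros HP.
  destruct (sat_fh_linear_near_0 h hd Hh) as [L [eta [Heta Hlin]]].
  destruct (continuous_left_interval P t0 Ts eta HTs HPc Heta) as [a1 [Ha1 HPclose]].
  destruct (continuous_left_interval Z a1 Ts 1 ltac:(lra) HZc Rlt_0_1) as [a [Ha HZclose]].
  assert (0 < P Ts); [|lra].
  apply (pos_of_derive_ge_linear P (lambda + g * (Z Ts + 1) * L) a Ts);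
    [lra|apply Hbefore; lra|apply solution_continuous; lra|exact HPc|].
  intros x Hx. destruct (Hder x ltac:(lra)) as [_ [HdP _]].
  eexists; split; [exact HdP|].
  destruct (Hbefore x ltac:(lra)) as [HNx [HPx HZx]].
  specialize (HPclose x ltac:(lra)). specialize (HZclose x ltac:(lra)).
  apply Rabs_def2 in HPclose. apply Rabs_def2 in HZclose.
  assert (Hhx : h (P x) <= L * P x) by (apply Hlin; lra).
  pose proof (sat_fh_nonneg _ _ (P x) Hh ltac:(lra)).
  pose proof (sat_fh_nonneg _ _ (N x) Hf ltac:(lra)).
  assert (Z x * h (P x) <= (Z Ts + 1) * (L * P x)).
  { apply Rle_trans with ((Z Ts + 1) * h (P x));
      [apply Rmult_le_compat_r|apply Rmult_le_compat_l]; lra. }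
  assert (0 <= mu * P x * f (N x)) by (repeat apply Rmult_le_pos; lra).
  nra.
Qed.

Theorem solution_pos (t : R) : 0 <= t -> 0 < N t /\ 0 < P t /\ 0 < Z t.
Proof.
  intros Ht. pose proof t0_pos.
  set (G := fun s => 0 < N s /\ 0 < P s /\ 0 < Z s).
  change (G t). apply NNPP. intros Hfail.
  assert (Htt : t0 < t) by (apply Rnot_le_lt; intros Htt; apply Hfail, initial_pos; lra).
  destruct (first_failure G 0 t0 t) as [Ts [HTs [Hbefore Hafter]]];
    [lra|exact initial_pos|exact Hfail|].
  assert (HGTs : G Ts).
  { destruct (Req_dec Ts t0) as [->|Hne]; [apply initial_pos; lra|].
    split; [|split]; [apply N_pos_at|apply P_pos_at|apply Z_pos_at]; (lra || exact Hbefore). }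
  destruct (solution_continuous Ts ltac:(lra)) as [HNc [HPc HZc]].
  destruct HGTs as [HN [HP HZ]].
  destruct (filter_and _ _ (locally_gt_of_continuous N Ts 0 HNc HN)
              (filter_and _ _ (locally_gt_of_continuous P Ts 0 HPc HP)
                 (locally_gt_of_continuous Z Ts 0 HZc HZ))) as [rho Hrho].
  destruct (Hafter rho (cond_pos rho)) as [s [Hs1 [Hs2 Hs3]]].
  apply Hs3, Hrho. change (Rabs (s - Ts) < rho). apply Rabs_def1; lra.
Qed.

Lemma P_derive_le (beta c : R) : 0 <= c -> NT - beta <= c -> mu * f c <= lambda ->
  forall t, t0 < t -> beta <= P t ->
  exists l, is_derive P t l /\ l <= beta * (mu * f c - lambda).
Proof.
  intros Hc HcNT Hfc t Ht HPt. pose proof t0_pos. destruct Hsol as [_ [_ Hder]].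
  destruct (Hder t Ht) as [_ [HdP _]]. eexists; split; [exact HdP|].
  destruct (solution_pos t ltac:(lra)) as [HN [HP HZ]].
  assert (Htot : N t + P t + Z t <= NT).
  { apply (total_le_NT (t + 1)); [lra|intros s Hs; apply solution_pos; lra|lra]. }
  assert (mu * f (N t) <= mu * f c)
    by (apply Rmult_le_compat_l; [lra|apply (sat_fh_le _ _ _ _ Hf); lra]).
  pose proof (sat_fh_nonneg _ _ (P t) Hh ltac:(lra)).
  assert (0 <= g * Z t * h (P t)) by (repeat apply Rmult_le_pos; lra).
  assert (P t * (mu * f (N t) - lambda) <= beta * (mu * f c - lambda)) by nra.
  lra.
Qed.

End Model.

Theorem lemma2
  (mu lambda g gamma delta delta0 m NT : R)
  (f fd h hd Rf Rd : R -> R)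
  (Hmu : mu > lambda) (Hlam : lambda > 0) (Hg : g > 0)
  (Hgamma : 0 < gamma <= 1) (Hdelta : delta > 0) (Hgd : gamma * g > delta)
  (Hdelta0 : delta0 >= 0) (Hm : m > 0) (HNT : NT > 0)
  (Hf : sat_fh f fd) (Hh : sat_fh h hd) (HR : sat_R Rf Rd)
  (NT1 : R) (HNT1 : 0 <= NT1 /\ f NT1 = lambda / mu)
  (t0 : R) (phi1 phi2 phi3 : R -> R)
  (Hphi : in_D Rf h gamma g delta0 m NT t0 phi1 phi2 phi3)
  (N P Z : R -> R)
  (Hsol : is_solution f h Rf mu lambda g gamma delta delta0 m NT t0
            phi1 phi2 phi3 N P Z)
  (HNTgt : NT > NT1) :
  forall beta : R, beta > NT - NT1 ->
    exists t1 : R, t1 >= t0 /\ forall t : R, t >= t1 -> P t < beta.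
Proof.
  intros beta Hbeta. destruct HNT1 as [HNT1_nonneg HfNT1].
  assert (HNT1_pos : 0 < NT1).
  { destruct HNT1_nonneg as [|<-]; [assumption|].
    destruct Hf as [_ [_ [Hf0 _]]]. rewrite Hf0 in HfNT1.
    assert (0 < lambda / mu) by (apply Rdiv_lt_0_compat; lra). lra. }
  set (c := Rmax 0 (NT - beta)).
  assert (Hc : 0 <= c /\ NT - beta <= c /\ c < NT1) by (unfold c, Rmax; destruct Rle_dec; lra).
  assert (Hfc : mu * f c < lambda).
  { assert (f c < lambda / mu) by (rewrite <- HfNT1; apply (sat_fh_lt _ _ _ _ Hf); lra).
    replace lambda with (mu * (lambda / mu)) by (field; lra).
    apply Rmult_lt_compat_l; lra. }
  apply (eventually_below P t0 beta (beta * (mu * f c - lambda))).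
  - assert (0 < beta) by lra. nra.
  - intros t Ht. pose proof (t0_pos Hphi).
    exact (proj1 (proj2 (solution_continuous Hsol t ltac:(lra)))).
  - apply (P_derive_le Hmu Hlam Hg Hgamma Hdelta Hdelta0 Hm Hf Hh HR Hphi Hsol); lra.
Qed.
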